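(* Let $q$ be a prime power and $m\ge1$. For every Reed–Solomon code $\mathcal{C}$ over $\mathbb{F}_{q^m}$, every generalized subfield subcode of $\mathcal{C}$ is an alternant code over $\mathbb{F}_q$ (defined from a generalized Reed–Solomon code over $\mathbb{F}_{q^m}$); conversely, every such alternant code is a generalized subfield subcode of some Reed–Solomon code over $\mathbb{F}_{q^m}$. That is, the generalized subfield subcodes of Reed–Solomon codes are exactly the alternant codes.
   Context: Reed–Solomon code: for $1\le k\le n$ and pairwise distinct $a_1,\dots,a_n\in\mathbb{F}_{q^m}$, $RS_k(a)=\{(g(a_1),\dots,g(a_n)) : g\in\mathbb{F}_{q^m}[X],\ \deg g<k\}$. Generalized Reed–Solomon code: the image of a Reed–Solomon code under right multiplication by an $n\times n$ monomial matrix over $\mathbb{F}_{q^m}$, i.e. $\{(v_1g(a_1),\dots,v_ng(a_n)):\deg g<k\}$ with all $v_i\neq0$. Alternant code: $\mathcal{D}\cap\mathbb{F}_q^n$ for a generalized Reed–Solomon code $\mathcal{D}$ over $\mathbb{F}_{q^m}$. Generalized subfield subcode: for a basis $\mathcal{B}=(b_1,\dots,b_m)$ of $\mathbb{F}_{q^m}$ over $\mathbb{F}_q$, let $\phi_{\mathcal{B}}(\sum_i x_ib_i)=(x_1,\dots,x_m)$ and $Im_q(\mathcal{C})=\{(\phi_{\mathcal{B}}(c_1)|\cdots|\phi_{\mathcal{B}}(c_n)):c\in\mathcal{C}\}\subseteq(\mathbb{F}_q^m)^n$. For $f=(f_1,\dots,f_n)\in GL_q(m)^n$ (the $\mathbb{F}_q$-linear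 automorphisms of $\mathbb{F}_q^m$) and a permutation $\pi$ of $\{1,\dots,n\}$, $mon=\pi\circ f$ applies $f_i$ to the $i$-th block and then permutes blocks by $\pi$. For $u\in\{1,\dots,m\}^n$ and $D\subseteq(\mathbb{F}_q^m)^n$, with $x_{j,l}$ the $l$-th coordinate of block $j$, $S_u(D)=\{(x_{1,u_1},\dots,x_{n,u_n}):x\in D,\ x_{j,l}=0\ \forall j,\forall l\ne u_j\}$. The generalized subfield subcodes of $\mathcal{C}$ are the codes $S_u(mon(Im_q(\mathcal{C})))$ for all choices of $\mathcal{B},u,f,\pi$. *)

From HB Require Import structures.
From mathcomp Require Import all_boot all_order all_algebra all_fingroup all_field.
Set Implicit Arguments. Unset Strict Implicit. Unset Printing Implicit Defensive.
Import GRing.Theory.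
Local Open Scope ring_scope.

Definition code (R : Type) (n : nat) := 'rV[R]_n -> Prop.

Definition RS (L : fieldType) (n k : nat) (a : 'I_n -> L) : code L n :=
  fun c => exists g : {poly L}, (size g <= k)%N /\ forall i, c 0 i = g.[a i].

Definition GRS (L : fieldType) (n k : nat) (a v : 'I_n -> L) : code L n :=
  fun c => exists g : {poly L}, (size g <= k)%N /\ forall i, c 0 i = v i * g.[a i].

Definition subfield_subcode (F : fieldType) (L : fieldExtType F) (n : nat)
  (D : code L n) : code F n :=
  fun x => D (map_mx (in_alg L) x).

Definition is_alternant (F : fieldType) (L : fieldExtType F) (n : nat)
  (E : code F n) : Prop :=
  exists (k : nat) (a v : 'I_n -> L),
    [/\ (1 <= k <= n)%N, injective a, (forall i, v i != 0) &
        forall x, E x <-> subfield_subcode (GRS k a v) x].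

(* Im_q(C): row j of the n x m matrix is the block phi_B(c_j). *)
Definition Imq (F : fieldType) (L : fieldExtType F) (n : nat)
  (B : (\dim {:L}).-tuple L) (C : code L n) : 'M[F]_(n, \dim {:L}) -> Prop :=
  fun X => exists c, C c /\ forall j l, X j l = coord B l (c 0 j).

(* mon = pi o f : each block j is mapped by the invertible matrix M j
   (acting on row vectors), and the blocks are permuted by s. *)
Definition mon (F : fieldType) (n m : nat) (M : 'I_n -> 'M[F]_m) (s : 'S_n)
  (X : 'M[F]_(n, m)) : 'M[F]_(n, m) :=
  \matrix_(j, l) (row (s j) X *m M (s j)) 0 l.

Definition Su (F : fieldType) (n m : nat) (u : 'I_n -> 'I_m)
  (D : 'M[F]_(n, m) -> Prop) : code F n :=
  fun y => exists X, [/\ D X, (forall j l, l != u j -> X j l = 0) &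
                         forall j, y 0 j = X j (u j)].

Definition is_gen_subfield_subcode (F : fieldType) (L : fieldExtType F)
  (n : nat) (C : code L n) (E : code F n) : Prop :=
  exists (B : (\dim {:L}).-tuple L) (u : 'I_n -> 'I_(\dim {:L}))
         (M : 'I_n -> 'M[F]_(\dim {:L})) (s : 'S_n),
    [/\ basis_of fullv B, (forall j, M j \in unitmx) &
        forall y, E y <-> Su u (fun X => exists Y, Imq B C Y /\ X = mon M s Y) y].

From mathcomp Require Import all_boot all_algebra all_fingroup all_field.
Import GRing.Theory passmx.
Local Open Scope ring_scope.

(* Fix a basis B of L over F and an invertible F-matrix M. The coordinate row
   of c in L is sent by M to the scaled unit row z e_p exactly when c = z w,
   where w is the nonzero element of L with coordinate row e_p M^-1. Hence
   the generalized subfield subcode of RS_k(a) with data (B, u, M, pi) is the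
   subfield subcode of GRS_k(a o pi, 1/w), w_j being the element attached to
   (M_(pi j), u_j). Conversely, with pi = id, a constant u picking the basis
   vector b, and M_j the matrix of multiplication by b v_j, the weights are
   w_j = 1/v_j, so every alternant code arises in this way. *)

Lemma eq_GRS {L : fieldType} {n : nat} (k : nat) (a a' v v' : 'I_n -> L)
    (c : 'rV_n) :
  a =1 a' -> v =1 v' -> GRS k a v c <-> GRS k a' v' c.
Proof.
move=> eq_a eq_v; split=> -[g [size_g Hg]]; exists g; split=> // i.
  by rewrite -eq_a -eq_v.
by rewrite eq_a eq_v.
Qed.

Lemma row_delta_mxP {R : pzRingType} {m : nat} (r : 'rV[R]_m) (p : 'I_m)
    (z : R) :
  r = z *: delta_mx 0 p <-> (forall l, l != p -> r 0 l = 0) /\ r 0 p = z.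
Proof.
split=> [-> | [r_eq0 <-]].
  by split=> [l /negPf neq_lp|]; rewrite !mxE ?neq_lp ?eqxx ?mulr0 ?mulr1.
apply/rowP=> l; rewrite !mxE eqxx /=.
by case: (eqVneq l p) => [-> | /r_eq0 ->]; rewrite ?mulr1 ?mulr0.
Qed.

Section SelectedCoordinates.
Context {F : fieldType} {n m : nat}.
Variable u : 'I_n -> 'I_m.

Lemma SuP (D : 'M[F]_(n, m) -> Prop) (y : 'rV_n) :
  Su u D y <-> exists2 X, D X & forall j, row j X = y 0 j *: delta_mx 0 (u j).
Proof.
split=> [[X [DX X_eq0 y_X]] | [X DX X_row]].
  exists X => // j; apply/row_delta_mxP.
  by split=> [l /X_eq0|]; rewrite mxE ?y_X.
exists X; split=> // j; have /row_delta_mxP[X_eq0 X_u] := X_row j.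
  by move=> l /X_eq0; rewrite mxE.
by rewrite -X_u mxE.
Qed.

Lemma row_mon (M : 'I_n -> 'M[F]_m) (s : 'S_n) (X : 'M_(n, m)) (j : 'I_n) :
  row j (mon M s X) = row (s j) X *m M (s j).
Proof. by apply/rowP=> l; rewrite !mxE. Qed.

End SelectedCoordinates.

Section GeneralizedSubfieldSubcode.
Context {F : fieldType} {L : fieldExtType F} {n : nat}.
Local Notation d := (\dim {:L}).
Variable B : d.-tuple L.
Context {u : 'I_n -> 'I_d} {M : 'I_n -> 'M[F]_d} {s : 'S_n}.

Lemma Su_mon_Imq (C : code L n) (y : 'rV_n) :
  Su u (fun X => exists Y, Imq B C Y /\ X = mon M s Y) y <->
  exists2 c, C c &
    forall j, rVof B (c 0 (s j)) *m M (s j) = y 0 j *: delta_mx 0 (u j).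
Proof.
have row_Imq (c : 'rV_n) (Y : 'M_(n, d)) j :
    (forall j l, Y j l = coord B l (c 0 j)) ->
    row j Y = rVof B (c 0 j).
  by move=> Y_c; apply/rowP=> l; rewrite !mxE Y_c.
split=> [/SuP[_ [Y [[c [Cc Y_c]] ->]] X_row] | [c Cc c_row]].
  by exists c => // j; rewrite -(row_Imq c Y) // -row_mon.
pose Y := \matrix_(j, l) coord B l (c 0 j).
have Y_c j l : Y j l = coord B l (c 0 j) by rewrite mxE.
apply/SuP; exists (mon M s Y); first by exists Y; split=> //; exists c.
by move=> j; rewrite row_mon (row_Imq c).
Qed.

Hypothesis B_basis : basis_of fullv B.

Definition block_weight (N : 'M[F]_d) (p : 'I_d) : L :=
  vecof B (delta_mx 0 p *m invmx N).

Lemma block_weight_neq0 (N : 'M[F]_d) (p : 'I_d) :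
  N \in unitmx -> block_weight N p != 0.
Proof.
move=> N_unit; rewrite vecof_eq0 //; apply/eqP.
move/(congr1 (mulmx^~ N)); rewrite mulmxKV // mul0mx => /rowP/(_ p)/eqP.
by rewrite !mxE !eqxx oner_eq0.
Qed.

Lemma rVof_mul_unit_delta (N : 'M[F]_d) (p : 'I_d) (c : L) (z : F) :
  N \in unitmx ->
  rVof B c *m N = z *: delta_mx 0 p <-> z%:A = (block_weight N p)^-1 * c.
Proof.
move=> N_unit; have w_neq0 := block_weight_neq0 N p N_unit.
apply: (@iff_trans _ (c = z%:A * block_weight N p)).
  rewrite mulr_algl /block_weight -linearZ /= scalemxAl.
  split=> [<- | ->]; first by rewrite mulmxK // rVofK.
  by rewrite vecofK // mulmxKV.
split=> [-> | ->]; first by rewrite mulrCA mulVf // mulr1.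
by rewrite mulrC mulrA divff // mul1r.
Qed.

Hypothesis M_unit : forall j, M j \in unitmx.

Lemma gen_subfield_subcode_RS (k : nat) (a : 'I_n -> L) (y : 'rV[F]_n) :
  Su u (fun X => exists Y, Imq B (RS k a) Y /\ X = mon M s Y) y <->
  subfield_subcode
    (GRS k (a \o s) (fun j => (block_weight (M (s j)) (u j))^-1)) y.
Proof.
apply: iff_trans (Su_mon_Imq _ _) _.
split=> [[c [g [size_g c_g]] c_row] | [g [size_g y_g]]].
  exists g; split=> // j; rewrite mxE /= -c_g.
  exact/rVof_mul_unit_delta/c_row.
exists (\row_i g.[a i]); first by exists g; split=> // i; rewrite mxE.
move=> j; apply/rVof_mul_unit_delta; rewrite // mxE.
by have := y_g j; rewrite mxE.
Qed.

End GeneralizedSubfieldSubcode.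

Section MultiplicationMatrix.
Context {F : fieldType} {L : fieldExtType F}.
Local Notation d := (\dim {:L}).
Variables (B : d.-tuple L) (B_basis : basis_of fullv B).

Lemma rVof_mulr (x lam : L) :
  rVof B (x * lam) = rVof B x *m mxof B B (amulr lam).
Proof. by rewrite -rVof_app // lfunE. Qed.

Lemma amulr_mx_unit (lam : L) : lam != 0 -> mxof B B (amulr lam) \in unitmx.
Proof.
move=> lam_neq0.
have mulr_inv : mxof B B (amulr lam) *m mxof B B (amulr lam^-1) = 1%:M.
  rewrite -mxof_comp // -(mxof1 (basis_free B_basis)); congr mxof.
  by apply/lfunP=> x; rewrite comp_lfunE !lfunE /= mulfK.
by case/mulmx1_unit: mulr_inv.
Qed.

Lemma block_weight_amulr (p : 'I_d) (lam : L) :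
  lam != 0 -> block_weight B (mxof B B (amulr lam)) p = B`_p / lam.
Proof.
move=> lam_neq0; rewrite /block_weight -(rVofE B_basis).
rewrite -{1}[B`_p](divfK lam_neq0).
by rewrite rVof_mulr mulmxK ?amulr_mx_unit // rVofK.
Qed.

End MultiplicationMatrix.

Lemma gen_subfield_subcode_RS_alternant (F : fieldType) (L : fieldExtType F)
    (n k : nat) (a : 'I_n -> L) (E : code F n) :
  (1 <= k <= n)%N -> injective a -> is_gen_subfield_subcode (RS k a) E ->
  is_alternant L E.
Proof.
move=> k_bounds a_inj [B [u [M [s [B_basis M_unit E_def]]]]].
exists k, (a \o s), (fun j => (block_weight B (M (s j)) (u j))^-1); split=> //.
- exact: inj_comp a_inj (@perm_inj _ s).
- by move=> j; rewrite invr_eq0 block_weight_neq0.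
- by move=> y; apply: iff_trans (E_def y) _; apply: gen_subfield_subcode_RS.
Qed.

Lemma alternant_gen_subfield_subcode_RS (F : fieldType) (L : fieldExtType F)
    (n : nat) (E : code F n) :
  is_alternant L E ->
  exists k (a : 'I_n -> L),
    [/\ (1 <= k <= n)%N, injective a & is_gen_subfield_subcode (RS k a) E].
Proof.
move=> [k [a [v [k_bounds a_inj v_neq0 E_def]]]]; exists k, a; split=> //.
pose B := vbasis (fullv : {vspace L}).
have B_basis : basis_of fullv B := vbasisP fullv.
pose p0 : 'I_(\dim {:L}) := Ordinal (adim_gt0 fullv); pose b := B`_p0.
have b_neq0 : b != 0 by apply: (basis_not0 B_basis); rewrite mem_nth ?size_tuple.
have bv_neq0 j : b * v j != 0 by rewrite mulf_neq0.
exists B, (fun=> p0), (fun j => mxof B B (amulr (b * v j))), 1%g.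
have M_unit j : mxof B B (amulr (b * v j)) \in unitmx by exact: amulr_mx_unit.
split=> // y.
apply: iff_trans (E_def y) _; apply: iff_sym.
apply: iff_trans (gen_subfield_subcode_RS B B_basis M_unit _ _ _) _.
apply: eq_GRS => j /=; rewrite perm1 //.
by rewrite block_weight_amulr // invf_div mulrC mulKf.
Qed.

Theorem corollary3 (F : finFieldType) (L : fieldExtType F) (n : nat) :
  (forall (k : nat) (a : 'I_n -> L), (1 <= k <= n)%N -> injective a ->
     forall E : code F n, is_gen_subfield_subcode (RS k a) E -> is_alternant L E)
  /\
  (forall E : code F n, is_alternant L E ->
     exists (k : nat) (a : 'I_n -> L),
       [/\ (1 <= k <= n)%N, injective a & is_gen_subfield_subcode (RS k a) E]).
Proof.
split=> [k a k_bounds a_inj E | E].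
  exact: gen_subfield_subcode_RS_alternant.
exact: alternant_gen_subfield_subcode_RS.
Qed.
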